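(* Fix $R\in(0,1)$ and, when $\Delta_S^B\ne0$, let $\tilde i=\Delta_O^B/\Delta_S^B$. Let $\mathbb E[\cdot]$ denote expectation with respect to $i\sim F$. The value $V(R)$ of the recommendation system equals: (i) $\pi^B\big[\Delta_O^B-\Delta_S^B\,\mathbb E[i]\big]$ if $|\Delta_S^B|\le 2\Delta_O^B$; (ii) $(1-\pi^B)F(\tilde i)\big[\Delta_O^D-\Delta_S^D\,\mathbb E[i\mid i\le\tilde i]\big]+\pi^B(1-F(\tilde i))\big[\Delta_O^B-\Delta_S^B\,\mathbb E[i\mid i\ge\tilde i]\big]$ if $\Delta_S^B<-2\Delta_O^B$; (iii) $\pi^BF(\tilde i)\big[\Delta_O^B-\Delta_S^B\,\mathbb E[i\mid i\le\tilde i]\big]+(1-\pi^B)(1-F(\tilde i))\big[\Delta_O^D-\Delta_S^D\,\mathbb E[i\mid i\ge\tilde i]\big]$ if $\Delta_S^B>2\Delta_O^B$.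
   Context: Setting. Consumer types are $i\in[-1/2,1/2]$, distributed according to a continuous cumulative distribution function $F$ with full support on $[-1/2,1/2]$. A product has a quality vector $(Q_1,Q_2)\in\{0,1\}^2$; a type-$i$ consumer gets payoff $(1/2+i)Q_1+(1/2-i)Q_2$ from it. The versions $(1,1),(1,0),(0,1),(0,0)$ have prior probabilities $q_H,q_1,q_2,q_L$ respectively, all strictly positive and summing to $1$. One product carries a recommendation from a sender whose type is drawn from $F$ independently of the product; given a threshold $R\in(0,1)$, the sender gives a buy recommendation $B$ if her payoff from the product is at least $R$ and a don't-buy recommendation $D$ otherwise. Let $\phi_1(R)=1-F(R-1/2)$, $\phi_2(R)=F(1/2-R)$, $\pi^B=q_H+q_1\phi_1(R)+q_2\phi_2(R)$ and $\pi^D=1-\pi^B$. Posteriors: $p^B_H=q_H/\pi^B$, $p^B_1=q_1\phi_1(R)/\pi^B$, $p^B_2=q_2\phi_2(R)/\pi^B$, $p^B_L=0$; $p^D_H=0$, $p^D_1=q_1(1-\phi_1(R))/\pi^D$, $p^D_2=q_2(1-\phi_2(R))/\pi^D$, $p^D_L=q_L/\pi^D$. For $r\in\{B,D\}$ let $U_i^r=p_H^r+(1/2+i)p_1^r+(1/2-i)p_2^r$ and $U_i^0=q_H+(1/2+i)q_1+(1/2-i)q_2$. The objective and subjective effects of $r\in\{B,D\}$ are $\Delta_O^r=p_H^r-q_H+\frac{p_1^r-q_1}{2}+\frac{p_2^r-q_2}{2}$ and $\Delta_S^r=(p_2^r-q_2)-(p_1^r-q_1)$. The value of the recommendation system is the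 expected payoff gain of a receiver drawn from $F$ (independently of the sender) who, after observing the recommendation, optimally chooses between the recommended product and an unrecommended alternative: $V(R)=\pi^B\int_{-1/2}^{1/2}\max\{U_i^B-U_i^0,0\}\,dF(i)+\pi^D\int_{-1/2}^{1/2}\max\{U_i^D-U_i^0,0\}\,dF(i)$. *)

(* Consumer types i ∈ [-1/2,1/2] are
   modelled by a probability measure P on the real line (Borel sets). *)
From HB Require Import structures.
From mathcomp Require Import all_boot all_order all_algebra.
From mathcomp Require Import all_classical all_reals all_analysis.
Set Implicit Arguments. Unset Strict Implicit. Unset Printing Implicit Defensive.
Import Order.TTheory GRing.Theory Num.Theory.
Local Open Scope classical_set_scope.
Local Open Scope ring_scope.

Section Model.
Variables (R : realType) (P : probability R R).
Variables (qH q1 q2 qL : R).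

Definition F (x : R) : R := fine (P `]-oo, x]%classic).

Definition Eint (A : set R) (f : R -> R) : R :=
  fine (\int[P]_(x in A) (f x)%:E)%E.

Definition Ei : R := Eint setT id.
Definition Ei_le (t : R) : R := Eint `]-oo, t]%classic id / fine (P `]-oo, t]%classic).
Definition Ei_ge (t : R) : R := Eint `[t, +oo[%classic id / fine (P `[t, +oo[%classic).

Variable Rth : R.

Definition phi1 : R := 1 - F (Rth - 2^-1).
Definition phi2 : R := F (2^-1 - Rth).
Definition piB : R := qH + q1 * phi1 + q2 * phi2.
Definition piD : R := 1 - piB.

Definition pBH : R := qH / piB.
Definition pB1 : R := q1 * phi1 / piB.
Definition pB2 : R := q2 * phi2 / piB.
Definition pBL : R := 0.
Definition pDH : R := 0.
Definition pD1 : R := q1 * (1 - phi1) / piD.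
Definition pD2 : R := q2 * (1 - phi2) / piD.
Definition pDL : R := qL / piD.

Definition UB (i : R) : R := pBH + (2^-1 + i) * pB1 + (2^-1 - i) * pB2.
Definition UD (i : R) : R := pDH + (2^-1 + i) * pD1 + (2^-1 - i) * pD2.
Definition U0 (i : R) : R := qH + (2^-1 + i) * q1 + (2^-1 - i) * q2.

Definition DOB : R := pBH - qH + (pB1 - q1) / 2 + (pB2 - q2) / 2.
Definition DSB : R := (pB2 - q2) - (pB1 - q1).
Definition DOD : R := pDH - qH + (pD1 - q1) / 2 + (pD2 - q2) / 2.
Definition DSD : R := (pD2 - q2) - (pD1 - q1).

Definition V : R :=
  piB * Eint setT (fun i => Num.max (UB i - U0 i) 0)
  + piD * Eint setT (fun i => Num.max (UD i - U0 i) 0).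

Definition itilde : R := DOB / DSB.
End Model.

From Pilot Require Import Defs.
From HB Require Import structures.
From mathcomp Require Import all_boot all_order all_algebra.
From mathcomp Require Import all_classical all_reals all_analysis.
From mathcomp Require Import measurable_realfun ring lra.
Import Order.TTheory GRing.Theory Num.Theory.
Import numFieldNormedType.Exports.
Local Open Scope classical_set_scope.
Local Open Scope ring_scope.

(* The payoff gains of following a recommendation are affine in the type:
   [U^B_i - U^0_i = DOB - i DSB] and [U^D_i - U^0_i = DOD - i DSD].  Bayes
   plausibility ([piB p^B + piD p^D = q]) makes the second gain the negative
   multiple [-(piB / piD)] of the first, so the two positive parts that make up
   [V] live on opposite sides of the common root [itilde].  If
   [|DSB| <= 2 DOB], the B-gain is nonnegative and the D-gain nonpositive on
   the whole support [[-1/2, 1/2]].  Otherwise [DOB > 0] gives [DSB] the sign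
   of the case, and the expected positive part of each gain is its integral
   over a half-line cut at [itilde]: the mass [F itilde] or [1 - F itilde]
   (no atoms, as [F] is continuous) times a conditional mean. *)

Section CompactSupport.
Context {R : realType} {P : probability R R} {a b : R}.
Hypothesis Pab : P `[a, b]%classic = 1%E.

Lemma probability_setC_itvcc : P (~` `[a, b]%classic) = 0%E.
Proof. by rewrite probability_setC// Pab subee. Qed.

Lemma integrable_id : P.-integrable setT (EFin \o id).
Proof.
apply/integrableP; split; first exact/measurable_EFinP.
rewrite (ge0_negligible_integral _ _ _ _ probability_setC_itvcc)//;
  [|exact: measurableC|by apply/measurable_EFinP; exact: measurableT_comp].
rewrite setTD setCK.
pose M := (`|a| + `|b|)%:E.
apply: (@le_lt_trans _ _ (\int[P]_(x in `[a, b]%classic) cst M x)%E).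
  apply: ge0_le_integral => //.
  - by apply/measurable_EFinP; exact: measurableT_comp.
  - move=> x; rewrite /= in_itv /= => /andP[ax xb].
    have := normr_ge0 a; have := normr_ge0 b.
    have := ler_norm b; have := ler_norm (- a); rewrite normrN.
    by rewrite lee_fin ler_norml => *; apply/andP; split; lra.
by rewrite integral_cst// ltey_eq fin_numM ?fin_num_measure.
Qed.

Lemma Eint_affine (A : set R) (c d : R) : measurable A ->
  Eint P A (fun x => c - x * d) = c * fine (P A) - d * Eint P A id.
Proof.
move=> mA; have iA := integrableS measurableT mA (subsetT A) integrable_id.
have iM : P.-integrable A (EFin \o (fun x => x * d)).
  by apply: eq_integrable (integrableZl mA d iA) => // x _ /=; rewrite mulrC.
rewrite /Eint (eq_integral (fun x : R => (c%:E - (x * d)%:E)%E));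
  rewrite ?integralB_EFin//; last exact: finite_measure_integrable_cst.
rewrite integral_cst//.
rewrite (eq_integral (fun x : R => d%:E * (EFin \o id) x)%E); last first.
  by move=> x _; rewrite /= -EFinM mulrC.
rewrite integralZl// fineB ?fin_numM ?fin_num_measure ?integrable_fin_num//.
by rewrite !fineM ?fin_num_measure ?integrable_fin_num.
Qed.

Lemma Eint_affine_cond (A : set R) (c d : R) : measurable A ->
  Eint P A (fun x => c - x * d) =
  fine (P A) * (c - d * (Eint P A id / fine (P A))).
Proof.
move=> mA; rewrite Eint_affine//.
(* If [P A = 0] the conditional mean is the junk value [_ / 0 = 0]; the
   identity survives because the integral over a null set vanishes. *)
have [PA0|PA_neq0] := eqVneq (fine (P A)) 0; last by field.
suff -> : Eint P A id = 0 by rewrite PA0; ring.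
have PA : P A = 0%E by rewrite -[P A]fineK ?fin_num_measure// PA0.
rewrite /Eint (negligible_integral mA mA _ PA) ?setDv ?integral_set0//.
exact: integrableS measurableT mA (subsetT A) integrable_id.
Qed.

Lemma eq_Eint_on_support (f g : R -> R) :
  measurable_fun setT f -> measurable_fun setT g ->
  {in `[a, b]%classic, f =1 g} -> Eint P setT f = Eint P setT g.
Proof.
move=> mf mg fg; rewrite /Eint (ae_eq_integral (EFin \o g))//;
  try exact/measurable_EFinP.
exists (~` `[a, b]%classic).
split; [exact: measurableC | exact: probability_setC_itvcc |].
by move=> x /= fgx xab; apply: fgx => _; rewrite /= fg// inE.
Qed.

End CompactSupport.

Section Distribution.
Context {R : realType} (P : probability R R).

Lemma Eint_mkcond {A : set R} {f g : R -> R} :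
  (forall x, f x = if x \in A then g x else 0) -> Eint P setT f = Eint P A g.
Proof.
move=> fE; rewrite /Eint [in RHS]integral_mkcond; congr fine.
by apply: eq_integral => x _; rewrite patchE fE; case: ifP.
Qed.

Lemma F_ge0 x : 0 <= F P x.
Proof. by rewrite fine_ge0. Qed.

Lemma probability_itvNyc x : P `]-oo, x]%classic = (F P x)%:E.
Proof. by rewrite /F fineK// fin_num_measure. Qed.

Lemma F_le1 x : F P x <= 1.
Proof. by rewrite -lee_fin -probability_itvNyc probability_le1. Qed.

Lemma probability_itvoc x y : x <= y -> P `]x, y]%classic = (F P y - F P x)%:E.
Proof.
move=> xy; have -> : F P y = F P x + fine (P `]x, y]%classic).
  rewrite /F [in LHS](@itv_bndbnd_setU _ _ _ (BRight x)) ?bnd_simp// measureU//.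
    by rewrite fineD ?fin_num_measure.
  apply/disj_set2P/disj_setPS => z [/=]; rewrite !in_itv/= => zx /andP[].
  by move/(le_lt_trans zx); rewrite ltxx.
by rewrite addrAC subrr add0r fineK ?fin_num_measure.
Qed.

Hypothesis cF : continuous (F P).

Lemma probability_set1 x : P [set x] = 0%E.
Proof.
have Px_le e : 0 < e -> fine (P [set x]) <= F P x - F P (x - e).
  move=> e0; rewrite -lee_fin -probability_itvoc; last by rewrite gerBl ltW.
  rewrite fineK ?fin_num_measure//.
  apply: le_measure; rewrite ?inE;
    [exact: measurable_set1| exact: measurable_itv|].
  by move=> z /= ->; rewrite in_itv/= lexx ltrBlDr ltrDl e0.
suff Px_le0 : fine (P [set x]) <= 0.
  rewrite -[X in X = _]fineK ?fin_num_measure//; congr EFin.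
  by apply/eqP; rewrite eq_le Px_le0 fine_ge0.
rewrite leNgt; apply/negP => Px_gt0.
have /cvgr_dist_lt/(_ _ Px_gt0)/nbhs_ballP[d /= d0 Fd] := cF x.
have /Fd : ball x d (x - d / 2).
  rewrite -ball_normE /= opprB addrC subrK ger0_norm ?divr_ge0 ?ltW//.
  by rewrite ltr_pdivrMr// ltr_pMr// ltr1n.
have Px_le_d2 : fine (P [set x]) <= F P x - F P (x - d / 2).
  by rewrite Px_le ?divr_gt0.
rewrite ger0_norm; last exact: le_trans (fine_ge0 (measure_ge0 _ _)) Px_le_d2.
by move/(le_lt_trans Px_le_d2); rewrite ltxx.
Qed.

Lemma probability_itvcy x : fine (P `[x, +oo[%classic) = 1 - F P x.
Proof.
rewrite -setCitvl probability_setC//.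
suff -> : P `]-oo, x[%classic = (F P x)%:E by [].
rewrite -probability_itvNyc -(@setUitv1 _ _ _ _ true)// measureU//.
  by rewrite -[LHS]adde0; congr (_ + _); apply/esym/probability_set1.
by apply/seteqP; split => // z [/= + zx]; rewrite zx in_itv/= ltxx.
Qed.

End Distribution.

Lemma max_affine0_slope_gt0 {R : realFieldType} (c : R) {d : R} :
  0 < d -> forall x, Num.max (c - x * d) 0 =
  if x \in `]-oo, c / d]%classic then c - x * d else 0.
Proof.
move=> d_gt0 x; rewrite mem_setE in_itv /= ler_pdivlMr//.
by case: leP => h; [rewrite max_l ?subr_ge0 | rewrite max_r// subr_le0 ltW].
Qed.

Lemma max_affine0_slope_lt0 {R : realFieldType} (c : R) {d : R} :
  d < 0 -> forall x, Num.max (c - x * d) 0 =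
  if x \in `[c / d, +oo[%classic then c - x * d else 0.
Proof.
move=> d_lt0 x; rewrite mem_setE in_itv /= andbT ler_ndivrMr//.
by case: leP => h; [rewrite max_l ?subr_ge0 | rewrite max_r// subr_le0 ltW].
Qed.

Section PositivePart.
Context {R : realType} {P : probability R R} {a b : R}.
Hypotheses (Pab : P `[a, b]%classic = 1%E) (cF : continuous (F P)).

Let measurable_affine (c d : R) : measurable_fun setT (fun x : R => c - x * d).
Proof. by apply: measurable_funB => //; exact: measurable_funM. Qed.

Let measurable_max_affine0 (c d : R) :
  measurable_fun setT (fun x : R => Num.max (c - x * d) 0).
Proof. exact: measurable_maxr. Qed.

Lemma Eint_pos_affine_ge0_on_support c d :
  {in `[a, b]%classic, forall x, 0 <= c - x * d} ->
  Eint P setT (fun x => Num.max (c - x * d) 0) = c - d * Ei P.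
Proof.
move=> h_ge0; rewrite (eq_Eint_on_support Pab _ (fun x => c - x * d))//.
  by rewrite (Eint_affine Pab)// probability_setT mulr1.
by move=> x /h_ge0 /max_l.
Qed.

Lemma Eint_pos_affine_le0_on_support c d :
  {in `[a, b]%classic, forall x, c - x * d <= 0} ->
  Eint P setT (fun x => Num.max (c - x * d) 0) = 0.
Proof.
move=> h_le0; rewrite (eq_Eint_on_support Pab _ (fun=> 0))//.
  by rewrite /Eint integral0.
by move=> x /h_le0 /max_r.
Qed.

Lemma Eint_pos_affine_slope_gt0 c d : 0 < d ->
  Eint P setT (fun x => Num.max (c - x * d) 0) =
  F P (c / d) * (c - d * Ei_le P (c / d)).
Proof.
move=> d_gt0; rewrite (Eint_mkcond P (max_affine0_slope_gt0 c d_gt0)).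
by rewrite (Eint_affine_cond Pab).
Qed.

Lemma Eint_pos_affine_slope_lt0 c d : d < 0 ->
  Eint P setT (fun x => Num.max (c - x * d) 0) =
  (1 - F P (c / d)) * (c - d * Ei_ge P (c / d)).
Proof.
move=> d_lt0; rewrite (Eint_mkcond P (max_affine0_slope_lt0 c d_lt0)).
by rewrite (Eint_affine_cond Pab)// {1}(probability_itvcy P cF).
Qed.

End PositivePart.

Lemma affine_ge0_halfnorm {R : realFieldType} (c d x : R) :
  `|d| <= 2 * c -> `|x| <= 2^-1 -> 0 <= c - x * d.
Proof.
move=> dc x_le; have := ler_norm (x * d); rewrite normrM.
have : `|x| * `|d| <= 2^-1 * `|d| by rewrite ler_wpM2r.
lra.
Qed.

Definition prior_probs {R : numDomainType} (qH q1 q2 qL : R) :=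
  [/\ 0 < qH, 0 < q1, 0 < q2, 0 < qL & qH + q1 + q2 + qL = 1].

Section Recommendation.
Context {R : realType} (P : probability R R) {qH q1 q2 qL : R} (Rth : R).
Hypothesis prior : prior_probs qH q1 q2 qL.

Local Notation phi1 := (phi1 P Rth).
Local Notation phi2 := (phi2 P Rth).
Local Notation piB := (piB P qH q1 q2 Rth).
Local Notation piD := (piD P qH q1 q2 Rth).
Local Notation DOB := (DOB P qH q1 q2 Rth).
Local Notation DSB := (DSB P qH q1 q2 Rth).
Local Notation DOD := (DOD P qH q1 q2 Rth).
Local Notation DSD := (DSD P qH q1 q2 Rth).

Lemma UB_sub_U0 i : UB P qH q1 q2 Rth i - U0 qH q1 q2 i = DOB - i * DSB.
Proof. by rewrite /UB /U0 /Defs.DOB /Defs.DSB /pBH; ring. Qed.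

Lemma UD_sub_U0 i : UD P qH q1 q2 Rth i - U0 qH q1 q2 i = DOD - i * DSD.
Proof. by rewrite /UD /U0 /Defs.DOD /Defs.DSD /pDH; ring. Qed.

Lemma V_E : V P qH q1 q2 Rth =
  piB * Eint P setT (fun i => Num.max (DOB - i * DSB) 0) +
  (1 - piB) * Eint P setT (fun i => Num.max (DOD - i * DSD) 0).
Proof.
rewrite /V; congr (_ * Eint _ _ _ + _ * Eint _ _ _); apply: funext => i.
  by rewrite UB_sub_U0.
by rewrite UD_sub_U0.
Qed.

Let phi1_01 : 0 <= phi1 <= 1.
Proof. by rewrite /Defs.phi1 subr_ge0 F_le1 lerBlDr lerDl F_ge0. Qed.

Let phi2_01 : 0 <= phi2 <= 1.
Proof. by rewrite /Defs.phi2 F_le1 F_ge0. Qed.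

Lemma piB_gt0 : 0 < piB.
Proof.
have [qH_gt0 q1_gt0 q2_gt0 _ _] := prior.
have /andP[phi1_ge0 _] := phi1_01; have /andP[phi2_ge0 _] := phi2_01.
have := mulr_ge0 (ltW q1_gt0) phi1_ge0; have := mulr_ge0 (ltW q2_gt0) phi2_ge0.
by rewrite /Defs.piB => *; lra.
Qed.

Lemma piB_lt1 : piB < 1.
Proof.
have [_ q1_gt0 q2_gt0 qL_gt0 q_sum] := prior.
have /andP[_ phi1_le1] := phi1_01; have /andP[_ phi2_le1] := phi2_01.
have := ler_piMr (ltW q1_gt0) phi1_le1; have := ler_piMr (ltW q2_gt0) phi2_le1.
by rewrite /Defs.piB => *; lra.
Qed.

Let piB_neq0 : piB != 0. Proof. exact: lt0r_neq0 piB_gt0. Qed.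
Let piD_neq0 : piD != 0. Proof. by rewrite subr_eq0 eq_sym lt_eqF ?piB_lt1. Qed.

Lemma DOD_E : DOD = - (piB / piD) * DOB.
Proof.
rewrite /Defs.DOD /Defs.DOB /pDH /pD1 /pD2 /pBH /pB1 /pB2 /Defs.piD.
by field; rewrite piB_neq0 piD_neq0.
Qed.

Lemma DSD_E : DSD = - (piB / piD) * DSB.
Proof.
rewrite /Defs.DSD /Defs.DSB /pD1 /pD2 /pB1 /pB2 /Defs.piD.
by field; rewrite piB_neq0 piD_neq0.
Qed.

Lemma DOD_div_DSD : DOD / DSD = itilde P qH q1 q2 Rth.
Proof.
rewrite DOD_E DSD_E /itilde !mulNr invrN mulrN opprK.
rewrite invfM mulrACA divff ?mul1r//.
by rewrite mulf_neq0 ?invr_eq0.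
Qed.

Lemma UD_gain_E x : DOD - x * DSD = - (piB / piD) * (DOB - x * DSB).
Proof. by rewrite DOD_E DSD_E; ring. Qed.

Lemma piB_div_piD_gt0 : 0 < piB / piD.
Proof. by rewrite divr_gt0 ?subr_gt0 ?piB_gt0 ?piB_lt1. Qed.

Lemma UD_gain_le0 x : 0 <= DOB - x * DSB -> DOD - x * DSD <= 0.
Proof.
move=> gainB_ge0; rewrite UD_gain_E mulNr oppr_le0.
by apply: mulr_ge0 => //; exact: ltW piB_div_piD_gt0.
Qed.

Lemma DSD_gt0 : DSB < 0 -> 0 < DSD.
Proof.
by move=> DSB_lt0; rewrite DSD_E mulNr oppr_gt0 pmulr_rlt0 ?piB_div_piD_gt0.
Qed.

Lemma DSD_lt0 : 0 < DSB -> DSD < 0.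
Proof.
by move=> DSB_gt0; rewrite DSD_E mulNr oppr_lt0 pmulr_rgt0 ?piB_div_piD_gt0.
Qed.

Lemma DOB_gt0 : 0 < DOB.
Proof.
have [qH_gt0 _ _ qL_gt0 q_sum] := prior.
have DOB_E : DOB = (qH / piB - qH + qL) / 2.
  have -> : qL = 1 - (qH + q1 + q2) by rewrite -q_sum; ring.
  rewrite /Defs.DOB /pBH /pB1 /pB2 /Defs.piB.
  by field; rewrite piB_neq0.
have qH_le : qH <= qH / piB.
  by rewrite ler_pdivlMr ?piB_gt0// ler_piMr ?(ltW qH_gt0) ?(ltW piB_lt1).
by rewrite DOB_E divr_gt0//; lra.
Qed.

End Recommendation.

Theorem proposition3 (R : realType) (P : probability R R)
  (qH q1 q2 qL Rth : R) :
  0 < qH -> 0 < q1 -> 0 < q2 -> 0 < qL -> qH + q1 + q2 + qL = 1 ->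
  (* types lie in [-1/2, 1/2] *)
  P `[- 2^-1, 2^-1]%classic = 1%E ->
  (* the CDF F is continuous *)
  continuous (F P : R -> R) ->
  (* full support on [-1/2, 1/2]: F strictly increasing there *)
  (forall a b : R, - 2^-1 <= a -> a < b -> b <= 2^-1 -> F P a < F P b) ->
  0 < Rth < 1 ->
  let piB := piB P qH q1 q2 Rth in
  let DOB := DOB P qH q1 q2 Rth in
  let DSB := DSB P qH q1 q2 Rth in
  let DOD := DOD P qH q1 q2 Rth in
  let DSD := DSD P qH q1 q2 Rth in
  let it := itilde P qH q1 q2 Rth in
  let V := V P qH q1 q2 Rth in
  (`|DSB| <= 2 * DOB -> V = piB * (DOB - DSB * Ei P)) /\
  (DSB < - (2 * DOB) ->
     V = (1 - piB) * F P it * (DOD - DSD * Ei_le P it)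
         + piB * (1 - F P it) * (DOB - DSB * Ei_ge P it)) /\
  (2 * DOB < DSB ->
     V = piB * F P it * (DOB - DSB * Ei_le P it)
         + (1 - piB) * (1 - F P it) * (DOD - DSD * Ei_ge P it)).
Proof.
move=> qH_gt0 q1_gt0 q2_gt0 qL_gt0 q_sum Psupp cF _ _; cbv zeta.
have prior : prior_probs qH q1 q2 qL by [].
have DOB_gt0 := DOB_gt0 P Rth prior.
rewrite V_E; split; [|split] => DSB_cmp.
- have gainB_ge0 : {in `[- 2^-1, 2^-1]%classic, forall x : R,
      0 <= DOB P qH q1 q2 Rth - x * DSB P qH q1 q2 Rth}.
    move=> x; rewrite mem_setE in_itv/= -ler_norml.
    exact: affine_ge0_halfnorm.
  rewrite (Eint_pos_affine_ge0_on_support Psupp _ _ gainB_ge0).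
  rewrite (Eint_pos_affine_le0_on_support Psupp) ?mulr0 ?addr0//.
  by move=> x /gainB_ge0; exact: UD_gain_le0 prior _.
- have DSB_lt0 : DSB P qH q1 q2 Rth < 0 by lra.
  rewrite (Eint_pos_affine_slope_lt0 Psupp cF _ _ DSB_lt0).
  have DSD_gt0 := DSD_gt0 P Rth prior DSB_lt0.
  rewrite (Eint_pos_affine_slope_gt0 Psupp _ _ DSD_gt0).
  by rewrite (DOD_div_DSD P Rth prior) /itilde; ring.
- have DSB_gt0 : 0 < DSB P qH q1 q2 Rth by lra.
  rewrite (Eint_pos_affine_slope_gt0 Psupp _ _ DSB_gt0).
  have DSD_lt0 := DSD_lt0 P Rth prior DSB_gt0.
  rewrite (Eint_pos_affine_slope_lt0 Psupp cF _ _ DSD_lt0).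
  by rewrite (DOD_div_DSD P Rth prior) /itilde; ring.
Qed.
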